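(* $\displaystyle\lim_{m\to\infty} sd(\mathbb{Z}_2\times Q_{2^{m+1}})=0.$
   Context: For a finite group $G$, $L(G)$ is the set of all subgroups of $G$ and $sd(G)=\frac{1}{|L(G)|^2}|\{(H,K)\in L(G)^2: HK=KH\}|$. $Q_{2^{m+1}}=\langle x,y\mid x^{2^m}=e,\ y^2=x^{2^{m-1}},\ y^{-1}xy=x^{-1}\rangle$ is the generalized quaternion group of order $2^{m+1}$ ($m\geq 2$). *)

From mathcomp Require Import all_boot all_order all_algebra all_fingroup all_solvable.
Set Implicit Arguments. Unset Strict Implicit. Unset Printing Implicit Defensive.
Import GroupScope GRing.Theory Num.Theory.

Definition subgroup_lattice (gT : finGroupType) (G : {set gT}) : {set {set gT}} :=
  [set H : {set gT} | group_set H && (H \subset G)].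

Definition sd (gT : finGroupType) (G : {set gT}) : rat :=
  ((#|[set p : {set gT} * {set gT} |
        [&& p.1 \in subgroup_lattice G, p.2 \in subgroup_lattice G
          & (p.1 * p.2)%g == (p.2 * p.1)%g]]|)%:R
   / ((#|subgroup_lattice G| ^ 2)%N)%:R)%R.

Definition Z2xQ (m : nat) : finGroupType := ('I_2 * 'Q_(2 ^ m.+1))%type.

From mathcomp Require Import all_boot all_order all_algebra all_fingroup all_solvable.
From mathcomp Require Import zify lra.
Set Implicit Arguments. Unset Strict Implicit. Unset Printing Implicit Defensive.
Import GroupScope.

(* Let X = <x> be cyclic of index 2 in a group G of order 2^(m+1).  The
   subgroups of X form a chain, and a subgroup K not contained in X is
   generated by K :&: X together with any element of K outside X.  If H and K
   permute, neither lies in X and |H :&: X| <= |K :&: X|, then |HK| <= 2|K|, so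
   HK :&: X is contained in the subgroup <w> of X of order at most
   2|K :&: X|, and w^2 lies in K.  For b in H outside X, some element of K
   outside X is w^t b, hence K is generated by K :&: X and one of b, w b.  So K
   is determined by H, the exponent j with |K :&: X| = 2^j and one of three
   choices, and G has at most 6 (m+1) |L(G)| permuting pairs.
   A subgroup of Z_2 x G with projection P onto G is either Z_2 x P or, if it
   meets Z_2 x 1 trivially, the graph of a morphism P -> Z_2; when P is
   generated by two elements this leaves at most 5 possibilities.  Hence if all
   subgroups of G are 2-generated, Z_2 x G has at most 25 times as many
   permuting pairs as G, and it has at least as many subgroups.
   In Q_(2^(m+1)) the 2^m elements outside X have order 4, so |L| >= 2^m / 4,
   and altogether sd(Z_2 x Q_(2^(m+1))) <= 600 (m+1) / 2^m. *)

Definition permuting_pairs (gT : finGroupType) (G : {set gT}) :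
    {set {set gT} * {set gT}} :=
  [set p | [&& p.1 \in subgroup_lattice G, p.2 \in subgroup_lattice G
             & p.1 * p.2 == p.2 * p.1]].

Lemma sdE (gT : finGroupType) (G : {set gT}) :
  sd G = (#|permuting_pairs G|%:R / (#|subgroup_lattice G| ^ 2)%N%:R)%R.
Proof. by []. Qed.

Lemma subgroup_latticeT (gT : finGroupType) (A : {set gT}) :
  (A \in subgroup_lattice [set: gT]) = group_set A.
Proof. by rewrite inE subsetT andbT. Qed.

Lemma permuting_pairsT (gT : finGroupType) (A B : {group gT}) :
  ((gval A, gval B) \in permuting_pairs [set: gT]) = (A * B == B * A).
Proof. by rewrite inE !subgroup_latticeT !groupP. Qed.

Lemma permuting_pairsTP (gT : finGroupType) (p : {set gT} * {set gT}) :
    p \in permuting_pairs [set: gT] ->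
  exists A B : {group gT}, p = (gval A, gval B) /\ A * B = B * A.
Proof.
case: p => A B; rewrite inE !subgroup_latticeT /= => /and3P[gA gB /eqP cAB].
by exists (Group gA), (Group gB).
Qed.

Section CyclicSubgroupOfIndexTwo.

Variables (gT : finGroupType) (x : gT) (m : nat).
Hypotheses (cardT : #|[set: gT]| = (2 ^ m.+1)%N) (ox : #[x] = (2 ^ m)%N).
Local Notation X := <[x]>.

Definition cyc_sub j := <[x ^+ (2 ^ (m - j))%N]>.

Lemma card_cyc_sub j : j <= m -> #|cyc_sub j| = (2 ^ j)%N.
Proof.
move=> le_jm; rewrite -orderE orderXdiv ox ?dvdn_exp2l ?leq_subr //.
by rewrite -{1}(subnK le_jm) expnD mulKn ?expn_gt0.
Qed.

Lemma cyc_sub_mono i j : i <= j -> cyc_sub i \subset cyc_sub j.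
Proof.
move=> le_ij; rewrite cycle_subG.
have -> : (2 ^ (m - i) = 2 ^ (m - j) * 2 ^ ((m - i) - (m - j)))%N.
  by rewrite -expnD subnKC // leq_sub2l.
by rewrite expgM mem_cycle.
Qed.

Lemma cyc_sub_subX j : cyc_sub j \subset X.
Proof. by rewrite cycle_subG mem_cycle. Qed.

Lemma cyc_subP (A : {group gT}) : A \subset X -> exists2 j, j <= m & A :=: cyc_sub j.
Proof.
move=> sAX; have /dvdn_pfactor[//|j le_jm cardA] : #|A| %| 2 ^ m by rewrite -ox cardSg.
exists j => //; apply/eqP; rewrite (eq_subG_cyclic (cycle_cyclic x)) ?cyc_sub_subX //.
by rewrite cardA card_cyc_sub.
Qed.

Lemma sub_cyc_sub (A : {group gT}) j :
  A \subset X -> #|A| <= 2 ^ j -> A \subset cyc_sub j.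
Proof.
move=> sAX leAj; have [i le_im defA] := cyc_subP sAX.
rewrite defA cyc_sub_mono // -(leq_exp2l _ _ (ltnSn 1)) -(card_cyc_sub le_im).
by rewrite -defA.
Qed.

Lemma sqr_cyc_sub j : x ^+ (2 ^ (m - j.+1))%N ^+ 2 \in cyc_sub j.
Proof.
rewrite -expgM; have /dvdnP[q ->] : (2 ^ (m - j) %| 2 ^ (m - j.+1) * 2)%N.
  by rewrite -expnSr dvdn_exp2l // subnS; case: (m - j).
by rewrite mulnC expgM mem_cycle.
Qed.

Lemma index_cycle : #|[set: gT] : X| = 2.
Proof. by rewrite -divgS ?subsetT // cardT -orderE ox expnS mulnK ?expn_gt0. Qed.

Lemma card_notX (P : {group gT}) : ~~ (P \subset X) -> #|P| = (2 * #|P :&: X|)%N.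
Proof.
move=> nPX; have nXG := index2_normal (subsetT X) index_cycle.
have idx_dvd : #|P : X| %| 2.
  rewrite -index_cycle -indexMg -norm_joinEr ?indexSg ?joing_subl ?subsetT //.
  exact: subset_trans (subsetT P) (normal_norm nXG).
have idx_gt1 : 1 < #|P : X| by rewrite indexg_gt1.
have idx2 : #|P : X| = 2 by have := dvdn_leq (isT : 0 < 2) idx_dvd; lia.
by rewrite -(Lagrange (subsetIl P X)) indexgI idx2 mulnC.
Qed.

Lemma mulgV_notX u v : u \notin X -> v \notin X -> u * v^-1 \in X.
Proof.
move=> uX vX; have: u \in X :* v.
  by rewrite (rcoset_index2 (subsetT X) index_cycle) !inE ?uX ?vX.
by case/rcosetP=> y yX ->; rewrite mulgK.
Qed.

Definition gen2 j c := <<[set x ^+ (2 ^ (m - j))%N; c]>>.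

Lemma gen2E (U : {group gT}) j c :
  U :&: X = cyc_sub j -> c \in U -> c \notin X -> U :=: gen2 j c.
Proof.
move=> defUX cU cX.
have notX (V : {group gT}) : c \in V -> ~~ (V \subset X).
  by move=> cV; apply/subsetPn; exists c.
have cG : c \in gen2 j c by rewrite mem_gen // !inE eqxx orbT.
have xjU : x ^+ (2 ^ (m - j))%N \in U.
  by have /setIP[] : x ^+ (2 ^ (m - j))%N \in U :&: X by rewrite defUX cycle_id.
have sGU : gen2 j c \subset U.
  by rewrite gen_subG; apply/subsetP => z; rewrite !inE => /orP[]/eqP->.
have sXjG : cyc_sub j \subset gen2 j c :&: X.
  by rewrite subsetI cyc_sub_subX andbT cycle_subG mem_gen // !inE eqxx.
apply/eqP; rewrite eq_sym eqEcard sGU /= (card_notX (notX _ cU)).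
by rewrite (card_notX (notX _ cG)) defUX leq_mul2l subset_leq_card.
Qed.

Lemma permuting_gen2 (P Q : {group gT}) b : P * Q = Q * P ->
    b \in P -> b \notin X -> ~~ (Q \subset X) -> #|P :&: X| <= #|Q :&: X| ->
  exists2 j, j <= m &
    exists s : bool, Q :=: gen2 j (x ^+ (2 ^ (m - j.+1))%N ^+ s * b).
Proof.
move=> cPQ bP bX nQX lePQ; have [j le_jm defQX] := cyc_subP (subsetIr Q X).
exists j => //; set w := x ^+ (2 ^ (m - j.+1))%N.
have nPX : ~~ (P \subset X) by apply/subsetPn; exists b.
have sPXQ : P :&: X \subset P :&: Q.
  rewrite subsetI subsetIl (subset_trans _ (subsetIl Q X)) // defQX.
  by rewrite sub_cyc_sub ?subsetIr // -card_cyc_sub // -defQX.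
have defT : P <*> Q = P * Q :> {set gT} := comm_joingE cPQ.
have nTX : ~~ (P <*> Q \subset X).
  by apply/subsetPn; exists b; rewrite // mem_gen // inE bP.
have leTX : #|P <*> Q :&: X| <= 2 ^ j.+1.
  have := mul_cardG P Q; have := subset_leq_card sPXQ.
  have : 0 < #|P :&: Q| by apply/card_gt0P; exists 1; rewrite group1.
  rewrite -defT (card_notX nTX) (card_notX nPX) (card_notX nQX) defQX card_cyc_sub //.
  by rewrite expnS /=; nia.
have sTXw : P <*> Q :&: X \subset <[w]> by apply: sub_cyc_sub; rewrite ?subsetIr.
have [b' b'Q b'X] := subsetPn nQX.
have /cycleP[t defb'] : b' * b^-1 \in <[w]>.
  by rewrite (subsetP sTXw) // inE mulgV_notX // defT cPQ mem_mulg ?groupV.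
exists (odd t); apply: gen2E => //; last by rewrite groupMl // groupX ?mem_cycle.
have w2Q : w ^+ 2 \in Q.
  by have /setIP[] : w ^+ 2 \in Q :&: X by rewrite defQX sqr_cyc_sub.
have gQ : (w ^+ 2) ^+ t./2 \in Q by rewrite groupX.
rewrite -(groupMl _ gQ) mulgA -expgM -expgD mul2n addnC odd_double_half.
by rewrite -defb' mulgKV.
Qed.

Lemma repr_notX (A : {set gT}) : ~~ (A \subset X) -> repr (A :\: X) \in A :\: X.
Proof. by case/subsetPn=> z zA zX; apply: (mem_repr z); rewrite inE zX. Qed.

Definition partner (A : {set gT}) j (s : option bool) : {set gT} :=
  if s is Some s then gen2 j (x ^+ (2 ^ (m - j.+1))%N ^+ s * repr (A :\: X))
  else cyc_sub j.

Lemma permuting_partner (A B : {group gT}) : A * B = B * A ->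
    (B \subset X) || ~~ (A \subset X) && (#|A :&: X| <= #|B :&: X|) ->
  exists (j : 'I_m.+1) (s : option bool), B :=: partner A j s.
Proof.
move=> cAB; case: (boolP (B \subset X)) => [sBX _ | nBX /= /andP[nAX leAB]].
  by have [j le_jm ->] := cyc_subP sBX; exists (Ordinal (le_jm : j < m.+1)), None.
have /setDP[bA bX] := repr_notX nAX.
have [j le_jm [s ->]] := permuting_gen2 cAB bA bX nBX leAB.
by exists (Ordinal (le_jm : j < m.+1)), (Some s).
Qed.

Definition partner_pair (t : {set gT} * 'I_m.+1 * option bool * bool) :=
  let: (A, j, s, swap) := t in
  if swap then (partner A j s, A) else (A, partner A j s).

Lemma permuting_pairs_sub_partner : permuting_pairs [set: gT] \subset
  partner_pair @: setX (setX (setX (subgroup_lattice [set: gT]) setT) setT) setT.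
Proof.
apply/subsetP => _ /permuting_pairsTP[A [B [-> cAB]]].
set D := setX _ _.
have covered (C E : {group gT}) : C * E = E * C ->
    (E \subset X) || ~~ (C \subset X) && (#|C :&: X| <= #|E :&: X|) ->
  (gval C, gval E) \in partner_pair @: D /\ (gval E, gval C) \in partner_pair @: D.
  move=> cCE /(permuting_partner cCE)[j [s defE]].
  have CD swap : (gval C, j, s, swap) \in D.
    by rewrite !in_setX subgroup_latticeT groupP !in_setT.
  by split; apply/imsetP; [exists (gval C, j, s, false) | exists (gval C, j, s, true)];
    rewrite //= -defE.
have [sBX | nBX] := boolP (B \subset X).
  by apply: (proj1 (covered A B cAB _)); rewrite sBX.
have [ltAB | leBA] := ltnP #|A :&: X| #|B :&: X|; last first.
  by apply: (proj2 (covered B A (esym cAB) _)); rewrite nBX leBA orbT.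
have [sAX | nAX] := boolP (A \subset X).
  by apply: (proj2 (covered B A (esym cAB) _)); rewrite sAX.
by apply: (proj1 (covered A B cAB _)); rewrite nAX (ltnW ltAB) orbT.
Qed.

Lemma card_permuting_pairs_cyclic_index2 :
  #|permuting_pairs [set: gT]| <= #|subgroup_lattice [set: gT]| * m.+1 * 6.
Proof.
apply: leq_trans (subset_leq_card permuting_pairs_sub_partner) _.
apply: leq_trans (leq_imset_card _ _) _.
by rewrite !cardsX !cardsT card_option card_bool card_ord -!mulnA.
Qed.

Lemma two_generated (P : {group gT}) : exists a b : gT, P :=: <<[set a; b]>>.
Proof.
have [j _ defPX] := cyc_subP (subsetIr P X).
have [sPX | /repr_notX/setDP[cP cX]] := boolP (P \subset X).
  exists (x ^+ (2 ^ (m - j))%N), (x ^+ (2 ^ (m - j))%N).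
  by rewrite setUid -(setIidPl sPX).
by exists (x ^+ (2 ^ (m - j))%N), (repr (P :\: X)); apply: gen2E.
Qed.

Lemma exp_le_card_subgroup_lattice :
  {in ~: X, forall c, #[c] <= 4} -> 2 ^ m <= 4 * #|subgroup_lattice [set: gT]|.
Proof.
move=> order_notX.
have <- : #|~: X| = (2 ^ m)%N.
  apply/eqP; rewrite -(eqn_add2l #|X|) cardsC -cardsT cardT -orderE ox.
  by rewrite expnS mul2n addnn.
have sCL : (fun c => <[c]>) @: (~: X) \subset subgroup_lattice [set: gT].
  by apply/subsetP => _ /imsetP[c _ ->]; rewrite subgroup_latticeT groupP.
apply: leq_trans (leq_mul (leqnn 4) (subset_leq_card sCL)).
rewrite -sum1_card (partition_big_imset (fun c => <[c]>)) /= mulnC -sum_nat_const.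
apply: leq_sum => _ /imsetP[c cX ->]; rewrite sum1dep_card.
apply: leq_trans (order_notX c cX); apply: subset_leq_card.
by apply/subsetP => d; rewrite inE => /andP[_ /eqP <-]; apply: cycle_id.
Qed.

End CyclicSubgroupOfIndexTwo.

Section DirectProductWithZ2.

Variable gT : finGroupType.
Local Notation pT := (('I_2 * gT)%type : finGroupType).
Local Notation pr H := (snd_morphism 'I_2 gT @* H).
Local Notation z := ((ord_max, 1) : pT).

Lemma snd_eq_cases (u v : pT) : u.2 = v.2 -> u = v \/ u = z * v.
Proof.
case: u v => [u1 u2] [v1 v2] /= ->.
case: u1 v1 => [[|[|?]] ?] [[|[|?]] ?] //;
  by [ left; congr pair; apply: val_inj
     | right; congr pair; rewrite ?mul1g //; apply: val_inj ].
Qed.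

Lemma snd_inj_notz (H : {group pT}) u v :
  z \notin H -> u \in H -> v \in H -> u.2 = v.2 -> u = v.
Proof.
move=> zH uH vH /snd_eq_cases[// | defu].
by move: zH; rewrite -(mulgK v z) -defu groupM ?groupV.
Qed.

Definition gen_pair (P : {set gT}) : gT * gT :=
  odflt (1, 1) [pick ab | P == <<[set ab.1; ab.2]>>].

Hypothesis two_gen : forall P : {group gT}, exists a b : gT, P :=: <<[set a; b]>>.

Lemma gen_pairE (P : {group gT}) : P :=: <<[set (gen_pair P).1; (gen_pair P).2]>>.
Proof.
rewrite /gen_pair; case: pickP => [ab /eqP // | none].
by have [a [b /eqP defP]] := two_gen P; have := none (a, b); rewrite defP.
Qed.

Definition lift_subgroup (P : {set gT}) (s : option ('I_2 * 'I_2)) : {set pT} :=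
  if s is Some (e1, e2) then <<[set (e1, (gen_pair P).1); (e2, (gen_pair P).2)]>>
  else setX [set: 'I_2] P.

Lemma lift_subgroupP (H : {group pT}) : exists s, H :=: lift_subgroup (pr H) s.
Proof.
have [zH | nzH] := boolP (z \in H).
  exists None; apply/setP => u; rewrite inE in_setT /=.
  apply/idP/morphimP => [uH | [v _ vH defu2]]; first by exists u; rewrite ?inE.
  by have [-> // | ->] := snd_eq_cases defu2; rewrite groupM.
have : [set (gen_pair (pr H)).1; (gen_pair (pr H)).2] \subset pr H.
  by rewrite -gen_subG -(gen_pairE (pr H)%G).
rewrite subUset !sub1set => /andP[/morphimP[h1 _ h1H defa] /morphimP[h2 _ h2H defb]].
exists (Some (h1.1, h2.1)); rewrite /= defa defb -!surjective_pairing.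
have sGH : <<[set h1; h2]>> \subset H.
  by rewrite gen_subG; apply/subsetP => u; rewrite !inE => /orP[]/eqP->.
apply/eqP; rewrite eqEsubset sGH andbT; apply/subsetP => h hH.
have : h.2 \in pr <<[set h1; h2]>>.
  rewrite morphim_gen ?subsetT // morphimU !morphim_set1 ?inE //=.
  by rewrite -defa -defb -(gen_pairE (pr H)%G); apply/morphimP; exists h; rewrite ?inE.
case/morphimP=> h' _ h'G defh2.
by rewrite (snd_inj_notz nzH hH (subsetP sGH h' h'G) defh2).
Qed.

Definition lift_subgroup_pair
    (t : {set gT} * {set gT} * option ('I_2 * 'I_2) * option ('I_2 * 'I_2)) :=
  let: (P, Q, s, s') := t in (lift_subgroup P s, lift_subgroup Q s').

Lemma permuting_pairs_sub_lift_subgroup : permuting_pairs [set: pT] \subset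
  lift_subgroup_pair @: setX (setX (permuting_pairs [set: gT]) setT) setT.
Proof.
apply/subsetP => _ /permuting_pairsTP[H [K [-> cHK]]].
have [s defH] := lift_subgroupP H; have [s' defK] := lift_subgroupP K.
apply/imsetP; exists (pr H, pr K, s, s'); last by rewrite /= -defH -defK.
rewrite !in_setX !in_setT !andbT /= (permuting_pairsT (pr H)%G (pr K)%G).
by rewrite -!morphimMl ?subsetT // cHK.
Qed.

Lemma card_permuting_pairs_Z2 :
  #|permuting_pairs [set: pT]| <= #|permuting_pairs [set: gT]| * 25.
Proof.
apply: leq_trans (subset_leq_card permuting_pairs_sub_lift_subgroup) _.
apply: leq_trans (leq_imset_card _ _) _.
by rewrite !cardsX !cardsT card_option card_prod card_ord -!mulnA.
Qed.

End DirectProductWithZ2.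

Lemma card_subgroup_lattice_Z2 (gT : finGroupType) :
  #|subgroup_lattice [set: gT]| <= #|subgroup_lattice [set: ('I_2 * gT)%type]|.
Proof.
rewrite -(@card_in_imset _ _ (fun P => setX [set: 'I_2] P)); last first.
  move=> P Q _ _ /setP eqPQ; apply/setP => g.
  by have := eqPQ (1, g); rewrite !in_setX in_setT.
apply/subset_leq_card/subsetP => _ /imsetP[P gP ->].
rewrite inE subsetT andbT; rewrite subgroup_latticeT in gP.
exact: group_setX [set: 'I_2]%G (Group gP).
Qed.

Lemma quaternion_cyclic_index2 m : 1 < m ->
  exists x : 'Q_(2 ^ m.+1), [/\ #|[set: 'Q_(2 ^ m.+1)]| = (2 ^ m.+1)%N,
    #[x] = (2 ^ m)%N & {in ~: <[x]>, forall c, #[c] = 4}].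
Proof.
move=> m_gt1; have n_gt2 : 2 < m.+1 by [].
have [[x y] genQ _] := generators_quaternion n_gt2 (isog_refl [set: 'Q_(2 ^ m.+1)]%G).
have [[_ order4 _] _ _ _ _] := quaternion_structure n_gt2 genQ (isog_refl _).
have [cardQ _ ox _] := genQ.
by exists x; split=> // c; rewrite inE => cX; apply: order4; rewrite inE cX in_setT.
Qed.

Lemma card_permuting_pairs_Z2xQ m : 1 < m ->
  #|permuting_pairs [set: Z2xQ m]| * 2 ^ m <=
    600 * m.+1 * #|subgroup_lattice [set: Z2xQ m]| ^ 2.
Proof.
move=> m_gt1; have [x [cardQ ox order4]] := quaternion_cyclic_index2 m_gt1.
have leZ2 := card_permuting_pairs_Z2 (two_generated cardQ ox).
have leQ := card_permuting_pairs_cyclic_index2 cardQ ox.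
have expQ : 2 ^ m <= 4 * #|subgroup_lattice [set: 'Q_(2 ^ m.+1)]|.
  by apply: exp_le_card_subgroup_lattice cardQ ox _ => c /order4->.
have leL := card_subgroup_lattice_Z2 (quaternion_gtype (2 ^ m.+1)).
move: leZ2 leQ expQ leL.
set PZ := #|permuting_pairs _|; set PQ := #|permuting_pairs _|.
set LQ := #|subgroup_lattice _|; set LZ := #|subgroup_lattice _| => leZ2 leQ expQ leL.
have leP : PZ <= LQ * m.+1 * 150 by apply: leq_trans leZ2 _; lia.
apply: leq_trans (leq_mul leP expQ) _.
by have := leq_mul leL leL; nia.
Qed.

Lemma sq_le_exp2 m : 6 <= m -> (m.+1 ^ 2 <= 2 ^ m)%N.
Proof.
elim: m => // m IH; rewrite leq_eqVlt => /orP[/eqP <- // | lt6m].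
by have := IH lt6m; rewrite [(2 ^ _.+1)%N]expnS; nia.
Qed.

Import Order.TTheory GRing.Theory Num.Theory.
Local Open Scope ring_scope.

Lemma linear_over_exp2_lt (R : archiRealFieldType) (c : nat) (eps : R) : 0 < eps ->
  exists N, forall m, (N <= m)%N -> (c * m.+1)%:R / (2 ^ m)%:R < eps.
Proof.
move=> eps_gt0; exists (maxn 6 (Num.bound (c%:R / eps))) => m.
rewrite geq_max => /andP[m_ge6 le_bm].
have c_lt : c%:R < eps * m.+1%:R.
  rewrite mulrC -ltr_pdivrMr //; apply: lt_le_trans (archi_boundP _) _.
    by rewrite divr_ge0 // ltW.
  by rewrite ler_nat (leq_trans le_bm).
have sq_le : m.+1%:R * m.+1%:R <= (2 ^ m)%:R :> R.
  by rewrite -natrM ler_nat mulnn sq_le_exp2.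
have m_gt0 : 0 < m.+1%:R :> R by rewrite ltr0n.
rewrite ltr_pdivrMr ?ltr0n ?expn_gt0 // natrM; nra.
Qed.

Lemma card_subgroup_lattice_gt0 (gT : finGroupType) :
  (0 < #|subgroup_lattice [set: gT]|)%N.
Proof. by apply/card_gt0P; exists [set: gT]; rewrite subgroup_latticeT groupP. Qed.

Lemma sd_Z2xQ_le m : (1 < m)%N -> sd [set: Z2xQ m] <= (600 * m.+1)%:R / (2 ^ m)%:R.
Proof.
move=> m_gt1; have L_gt0 := card_subgroup_lattice_gt0 (Z2xQ m).
rewrite sdE ler_pdivrMr ?ltr0n ?expn_gt0 ?L_gt0 // mulrAC.
rewrite ler_pdivlMr ?ltr0n ?expn_gt0 // -!natrM ler_nat.
exact: card_permuting_pairs_Z2xQ.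
Qed.

Theorem corollary2p8 :
  forall eps : rat, (0 < eps)%R ->
  exists N : nat, forall m : nat, (N <= m)%N ->
    (sd [set: Z2xQ m] < eps)%R.
Proof.
move=> eps eps_gt0; have [N ltN] := linear_over_exp2_lt 600 eps_gt0.
exists (maxn 2 N) => m; rewrite geq_max => /andP[m_gt1 le_Nm].
exact: le_lt_trans (sd_Z2xQ_le m_gt1) (ltN m le_Nm).
Qed.
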